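(* Let $\{a,b\}$ be a $2$-element generating set of an abelian group $G$ (possibly infinite) with $a\ne b$, and let $I=|G:\langle a-b\rangle|$. Then $\mathrm{Cay}(G;a,b)$ has two arc-disjoint two-way infinite hamiltonian paths if and only if $I<\infty$ and there exist $k,\ell\in\{0,1,\ldots,I\}$ such that $k+\ell=I$ and $\langle a-b\rangle=\langle ka+\ell b\rangle=\langle \ell a+kb\rangle$.
   Context: The Cayley digraph $\mathrm{Cay}(G;a,b)$ has vertex set $G$ and an arc from $v$ to $v+s$ for all $v\in G$, $s\in\{a,b\}$. A two-way infinite hamiltonian path is a doubly-infinite sequence $\ldots,v_{-1},v_0,v_1,\ldots$ listing every vertex exactly once with an arc from $v_i$ to $v_{i+1}$ for all $i\in\mathbb{Z}$. Arc-disjoint means sharing no arc. *)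

From mathcomp Require Import all_boot all_order all_algebra.
Set Implicit Arguments. Unset Strict Implicit. Unset Printing Implicit Defensive.
Import GRing.Theory.
Local Open Scope ring_scope.

Definition cyc (G : zmodType) (x : G) : G -> Prop :=
  fun g => exists n : int, g = x *~ n.

Definition same_subgroup (G : zmodType) (H K : G -> Prop) : Prop :=
  forall g, H g <-> K g.

Definition generates2 (G : zmodType) (a b : G) : Prop :=
  forall g : G, exists m n : int, g = a *~ m + b *~ n.

Definition infinite_zmod (G : zmodType) : Prop :=
  ~ (exists s : seq G, forall g : G, g \in s).

Definition index_is (G : zmodType) (H : G -> Prop) (I : nat) : Prop :=
  exists reps : seq G,
    size reps = I /\
    (forall i j, (i < I)%N -> (j < I)%N -> H (nth 0 reps i - nth 0 reps j) -> i = j) /\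
    (forall g : G, exists2 r, r \in reps & H (g - r)).

Definition two_way_ham_path (G : zmodType) (a b : G) (f : int -> G) : Prop :=
  bijective f /\ forall i : int, f (i + 1) = f i + a \/ f (i + 1) = f i + b.

Definition arc_disjoint (G : zmodType) (f g : int -> G) : Prop :=
  forall i j : int, ~ (f i = g j /\ f (i + 1) = g (j + 1)).

(* Write H = <a - b>.  As b = a modulo H, a walk in Cay(G; a, b) started at
   v is in the coset v + n a + H at time n, and G / H is cyclic, generated by a.

   Given two arc-disjoint hamiltonian paths, every vertex is left by one of
   them along a and by the other along b.  If the first path left v along a
   and v + (a - b) along b, both vertices would enter v + a; hence the
   generator used at a vertex depends only on its H-coset.  Some nonzero
   multiple of a lies in H (the first path reaches f 0 + (a - b)), so a has a
   finite order I modulo H, which is |G : H|, and both paths are periodic: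
   f (n + I) = f n + (k a + l b) and g (n + I) = g n + (l a + k b), where k is
   the number of cosets left along a by f.  For a bijective walk of period I
   with displacement D, comparing times and cosets gives <D> = H.

   Conversely, repeating the words a^k b^l and b^k a^l gives two walks.  They
   are bijective because every element is reached in the right coset and
   <k a + l b> = H has infinite order (G is infinite and |G : H| is finite);
   they are arc-disjoint because a vertex is visited by both at times
   congruent modulo I, where the two words differ. *)

From HB Require Import structures.
From mathcomp Require Import all_boot all_order all_algebra.
From mathcomp Require Import zify ring.
From Stdlib Require Import Classical.
Import GRing.Theory.
Local Open Scope ring_scope.
Set Implicit Arguments. Unset Strict Implicit.

Section TrivialExtension.
Variable G : zmodType.

Definition trivial_ext := (int * G)%type.
HB.instance Definition _ := GRing.Zmodule.on trivial_ext.

Definition trivial_ext_mul (u v : trivial_ext) : trivial_ext :=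
  (u.1 * v.1, u.2 *~ v.1 + v.2 *~ u.1).

Lemma trivial_ext_mulA : associative trivial_ext_mul.
Proof.
move=> [m x] [n y] [p z]; congr pair => /=; first exact: mulrA.
by rewrite !mulrzDl -!mulrzA [p * m]mulrC [n * m]mulrC !addrA.
Qed.

Lemma trivial_ext_mulC : commutative trivial_ext_mul.
Proof. by move=> [m x] [n y]; congr pair; [exact: mulrC | exact: addrC]. Qed.

Lemma trivial_ext_mul1 : left_id (1, 0) trivial_ext_mul.
Proof. by move=> [m x]; congr pair; rewrite /= ?mul1r // mul0rz mulr1z add0r. Qed.

Lemma trivial_ext_mulDl : left_distributive trivial_ext_mul +%R.
Proof.
move=> [m x] [n y] [p z]; congr pair; rewrite /= ?mulrDl //.
by rewrite mulrzDl mulrzDr addrACA.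
Qed.

Lemma trivial_ext_one_neq0 : ((1, 0) : trivial_ext) != 0.
Proof. by rewrite xpair_eqE oner_eq0. Qed.

HB.instance Definition _ := GRing.Zmodule_isComNzRing.Build trivial_ext
  trivial_ext_mulA trivial_ext_mulC trivial_ext_mul1 trivial_ext_mulDl
  trivial_ext_one_neq0.

Definition trivial_ext_in (x : G) : trivial_ext := (0, x).

Lemma trivial_ext_in_is_zmod_morphism : zmod_morphism trivial_ext_in.
Proof. by []. Qed.

HB.instance Definition _ := GRing.isZmodMorphism.Build G trivial_ext
  trivial_ext_in trivial_ext_in_is_zmod_morphism.

Lemma trivial_ext_in_inj : injective trivial_ext_in.
Proof. by move=> x y [->]. Qed.

End TrivialExtension.

(* Identities of abelian groups, proved by [ring] inside the commutative ring
   int ⋉ G, into which G embeds additively. *)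
Ltac abel := apply: trivial_ext_in_inj; ring.

Lemma int_ind_succ (P : int -> Prop) :
  P 0 -> (forall n, P n <-> P (n + 1)) -> forall n, P n.
Proof.
move=> P0 PS; elim/int_rect => // n.
  by rewrite -addn1 PoszD => /PS.
by move=> Pn; apply/PS; have -> : - n.+1%:Z + 1 = - n%:Z by lia.
Qed.

Lemma sumr_shift_periodic (G : zmodType) (S : int -> G) (I : nat) (c : int) :
  (forall j, S (j + I%:Z) = S j) ->
  \sum_(u < I) S (c + u%:Z) = \sum_(u < I) S u%:Z.
Proof.
case: I => [|I] Sper; first by rewrite !big_ord0.
elim/int_ind_succ: c => [|c]; first by apply: eq_bigr => u _; rewrite add0r.
suff -> : \sum_(u < I.+1) S (c + 1 + u%:Z) = \sum_(u < I.+1) S (c + u%:Z) by [].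
rewrite big_ord_recr big_ord_recl /= addrC.
have -> : c + 1 + I%:Z = c + 0%N%:Z + I.+1%:Z by lia.
rewrite Sper; congr (_ + _); apply: eq_bigr => u _; congr S; rewrite /bump /=; lia.
Qed.

Lemma int_divmod (I : nat) (n : int) : (0 < I)%N ->
  exists q : int, exists2 r : nat, (r < I)%N & n = q * I%:Z + r%:Z.
Proof.
move=> I0; have I0' : I%:Z != 0 by rewrite eqz_nat -lt0n.
exists (n %/ I%:Z)%Z, `|(n %% I%:Z)%Z|%N.
  by rewrite -ltz_nat gez0_abs ?modz_ge0 // ltz_pmod.
by rewrite gez0_abs ?modz_ge0 //; exact: divz_eq.
Qed.

Section CyclicSubgroup.
Variables (G : zmodType) (h : G).
Local Notation H := (cyc h).

Lemma cyc0 : H 0.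
Proof. by exists 0; rewrite mulr0z. Qed.

Lemma cyc_id : H h.
Proof. by exists 1; rewrite mulr1z. Qed.

Lemma cycD x y : H x -> H y -> H (x + y).
Proof. by move=> [m ->] [n ->]; exists (m + n); rewrite mulrzDr. Qed.

Lemma cycN x : H x -> H (- x).
Proof. by move=> [m ->]; exists (- m); rewrite mulrNz. Qed.

Lemma cycB x y : H x -> H y -> H (x - y).
Proof. by move=> Hx /cycN; apply: cycD. Qed.

Lemma cycMz x (m : int) : H x -> H (x *~ m).
Proof. by move=> [n ->]; exists (n * m); rewrite mulrzA. Qed.

Lemma cyc_sum (I : finType) (F : I -> G) : (forall i, H (F i)) -> H (\sum_i F i).
Proof. by move=> HF; apply: (big_ind H) => //; [exact: cyc0 | exact: cycD]. Qed.

Lemma cyc_eq x y : H x -> x = y -> H y.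
Proof. by move=> Hx <-. Qed.

Lemma cyc_absz x (n : int) : H (x *~ n) -> H (x *+ `|n|%N).
Proof.
case: n => n; first by rewrite -pmulrn.
by rewrite NegzE mulrNz => /cycN; rewrite opprK -pmulrn.
Qed.

Definition generates_mod (x : G) := forall g, exists c : int, H (g - x *~ c).

Definition infinite_order (x : G) := forall n : int, x *~ n = 0 -> n = 0.

Definition order_mod (x : G) (I : nat) :=
  (0 < I)%N /\ forall c : int, H (x *~ c) <-> (I%:Z %| c)%Z.

Lemma order_mod_of_min x I : (0 < I)%N -> H (x *+ I) ->
  (forall j, (0 < j < I)%N -> ~ H (x *+ j)) -> order_mod x I.
Proof.
move=> I0 HxI xI_min; split=> // c; split; last first.
  by move=> /dvdzP [q ->]; apply: cyc_eq (cycMz q HxI) _; abel.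
move=> Hxc; have [q [r rI cE]] := int_divmod c I0.
have Hxr : H (x *+ r) by apply: cyc_eq (cycB Hxc (cycMz q HxI)) _; rewrite cE; abel.
have r0 : r = 0%N by case: (posnP r) => // r_gt0; case: (xI_min r) => //; lia.
by rewrite cE r0 addr0 dvdz_mull.
Qed.

Lemma exists_order_mod x (n : int) : n != 0 -> H (x *~ n) -> exists I, order_mod x I.
Proof.
move=> n0 /cyc_absz; have : (0 < `|n|)%N by rewrite absz_gt0.
elim/ltn_ind: `|n|%N => N IH N0 HxN.
have [[j [/andP [j0 jN] Hxj]] | no_smaller] :=
  classic (exists j, (0 < j < N)%N /\ H (x *+ j)).
  exact: IH Hxj.
by exists N; apply: order_mod_of_min => // j jN Hxj; apply: no_smaller; exists j.
Qed.

Section OrderMod.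
Variables (x : G) (I : nat).
Hypothesis gen : generates_mod x.

Lemma residue_mulrn (j : nat) : (0 < j)%N -> H (x *+ j) ->
  forall g, exists t : 'I_j, H (g - x *+ t).
Proof.
move=> j0 Hxj g; have [c Hgc] := gen g; have [q [t tj cE]] := int_divmod c j0.
exists (Ordinal tj); apply: cyc_eq (cycD Hgc (cycMz q Hxj)) _; rewrite cE; abel.
Qed.

Lemma order_mod_of_index : index_is H I -> H (x *+ I) -> order_mod x I.
Proof.
move=> [reps [reps_size [reps_uniq reps_cover]]] HxI.
have I0 : (0 < I)%N.
  have [r r_in _] := reps_cover 0.
  by rewrite -reps_size lt0n size_eq0; apply: contraTneq r_in => ->.
apply: order_mod_of_min => // j /andP [j0 jI] Hxj.
have [F HF] := fin_all_exists (fun i : 'I_I => residue_mulrn j0 Hxj (nth 0 reps i)).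
suff /leq_card : injective F by rewrite !card_ord leqNgt jI.
move=> i1 i2 Fi; apply/val_inj/reps_uniq; rewrite ?ltn_ord //.
by apply: cyc_eq (cycB (HF i1) (HF i2)) _; rewrite Fi; abel.
Qed.

Hypothesis xI : order_mod x I.

Lemma order_mod_gt0 : (0 < I)%N.
Proof. by case: xI. Qed.

Lemma cyc_mulrz_dvd (c : int) : H (x *~ c) <-> (I%:Z %| c)%Z.
Proof. by case: xI. Qed.

Lemma cyc_mulrz_eqmod (u : G) (n m : int) :
  H (u - x *~ n) -> H (u - x *~ m) -> (n = m %[mod I%:Z])%Z.
Proof.
move=> Hn Hm; apply/eqP; rewrite eqz_mod_dvd; apply/cyc_mulrz_dvd.
by apply: cyc_eq (cycB Hm Hn) _; abel.
Qed.

Lemma cyc_mulrz_mod (c : int) : H (x *~ c - x *~ (c %% I%:Z)%Z).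
Proof.
have : (I%:Z %| c - (c %% I%:Z)%Z)%Z by rewrite -eqz_mod_dvd modz_mod.
by move/cyc_mulrz_dvd/cyc_eq; apply; abel.
Qed.

Lemma index_of_order_mod : index_is H I.
Proof.
exists (mkseq (fun j => x *+ j) I); rewrite size_mkseq; split=> //; split.
  move=> i j iI jI; rewrite !nth_mkseq // => Hij.
  have : (i%:Z = j%:Z %[mod I%:Z])%Z.
    apply: (@cyc_mulrz_eqmod (x *+ i)); first by apply: cyc_eq cyc0 _; abel.
    by apply: cyc_eq Hij _; abel.
  by rewrite !modz_small; [case | lia..].
move=> g; have [c Hgc] := gen g; set r := (c %% I%:Z)%Z.
have r_ge0 : 0 <= r by rewrite modz_ge0 // eqz_nat -lt0n order_mod_gt0.
have rI : (`|r| < I)%N.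
  by rewrite -ltz_nat gez0_abs // ltz_pmod // ltz_nat order_mod_gt0.
exists (x *+ `|r|%N); first by apply: map_f; rewrite mem_iota.
apply: cyc_eq (cycD Hgc (cyc_mulrz_mod c)) _; rewrite pmulrn gez0_abs //; abel.
Qed.

Lemma same_subgroup_of_periodic (F : int -> G) (D : G) :
  bijective F -> (forall n, H (F n - F 0 - x *~ n)) ->
  (forall n, F (n + I%:Z) = F n + D) -> same_subgroup H (cyc D).
Proof.
move=> [Fi FK FiK] F_level F_per.
have F_mulI q : F (q * I%:Z) = F 0 + D *~ q.
  elim/int_ind_succ: q => [|q]; first by rewrite mul0r mulr0z addr0.
  by rewrite mulrDl mul1r F_per mulrzDr mulr1z addrA; split=> [-> | /addIr].
move=> y; split=> [Hy | [m ->]].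
  have /cyc_mulrz_dvd/dvdzP [q iE] : H (x *~ Fi (F 0 + y)).
    by apply: cyc_eq (cycB Hy (F_level (Fi (F 0 + y)))) _; rewrite FiK; abel.
  by exists q; apply: (@addrI _ (F 0)); rewrite -F_mulI -iE FiK.
have HxI : H (x *~ I%:Z) by apply/cyc_mulrz_dvd.
apply/cycMz/(cyc_eq (cycD (F_level I%:Z) HxI)).
by have := F_per 0; rewrite add0r => ->; abel.
Qed.

End OrderMod.

Lemma index_infinite_order (I : nat) :
  infinite_zmod G -> index_is H I -> infinite_order h.
Proof.
move=> Ginf [reps [_ [_ reps_cover]]] n hn; apply/eqP/negPn/negP => n0; apply: Ginf.
exists [seq r + h *~ t%:Z | r <- reps, t <- iota 0 `|n|]; move=> g.
have [r r_in [m gE]] := reps_cover g; apply/allpairsP; exists (r, `|(m %% n)%Z|%N).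
have m_ge0 : 0 <= (m %% n)%Z by rewrite modz_ge0.
split=> //=; first by rewrite mem_iota; have := ltz_mod m n0; lia.
rewrite gez0_abs // -(subrK r g) gE addrC; congr (_ + _).
by rewrite {1}(divz_eq m n) mulrzDr mulrC mulrzA hn mul0rz add0r.
Qed.

Lemma same_subgroup_infinite_order (D : G) :
  same_subgroup H (cyc D) -> infinite_order h -> infinite_order D.
Proof.
move=> HD h_inf n Dn; have [m hE] := proj1 (HD h) cyc_id.
by apply: h_inf; rewrite hE -mulrzA mulrC mulrzA Dn mul0rz.
Qed.

End CyclicSubgroup.

Lemma inj_surj_bijective (T : choiceType) (U : eqType) (f : T -> U) :
  injective f -> (forall y, exists x, f x = y) -> bijective f.
Proof.
move=> f_inj f_surj; have f_surjb y : exists x, f x == y.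
  by have [x <-] := f_surj y; exists x.
exists (fun y => xchoose (f_surjb y)) => [x|y]; last exact/eqP/(xchooseP (f_surjb y)).
by apply: f_inj; apply/eqP/(xchooseP (f_surjb (f x))).
Qed.

Lemma walk_telescope (G : zmodType) (F : int -> G) (n : int) (N : nat) :
  F (n + N%:Z) - F n = \sum_(u < N) (F (n + u%:Z + 1) - F (n + u%:Z)).
Proof.
rewrite -(big_mkord xpredT (fun u => F (n + u%:Z + 1) - F (n + u%:Z))).
rewrite (telescope_sumr_eq (fun u : nat => F (n + u%:Z))) ?addr0 // => u _.
by rewrite -addn1 PoszD addrA.
Qed.

Lemma sumr_ab (G : zmodType) (a b : G) (N : nat) (X : 'I_N -> G) :
  (forall u, X u = a \/ X u = b) ->
  \sum_u X u = a *+ #|[pred u | X u == a]| + b *+ #|[pred u | X u != a]|.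
Proof.
move=> Xab; rewrite (bigID [pred u | X u == a]) /= -!sumr_const.
congr (_ + _); apply: eq_bigr => u; first by move/eqP.
by case: (Xab u) => ->; rewrite ?eqxx.
Qed.

Section CayleyWalks.
Variables (G : zmodType) (a b : G).
Local Notation H := (cyc (a - b)).

Definition cayley_walk (F : int -> G) :=
  forall i, F (i + 1) = F i + a \/ F (i + 1) = F i + b.

Lemma cyc_step_ab (s : G) : s = a \/ s = b -> H (s - a).
Proof.
by case=> ->; [apply: cyc_eq (cyc0 _) _ | apply: cyc_eq (cycN (cyc_id _)) _]; abel.
Qed.

Lemma generates_mod_ab : generates2 a b -> generates_mod (a - b) a.
Proof.
move=> gen g; have [m [n ->]] := gen g; exists (m + n).
by apply: cyc_eq (cycN (cycMz n (cyc_id (a - b)))) _; abel.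
Qed.

Lemma cayley_walk_level F : cayley_walk F -> forall n, H (F n - F 0 - a *~ n).
Proof.
move=> Fw; elim/int_ind_succ => [|n]; first by apply: cyc_eq (cyc0 _) _; abel.
have Hstep : H (F (n + 1) - F n - a).
  by apply: cyc_step_ab; case: (Fw n) => ->; [left | right]; abel.
split=> Hn; first by apply: cyc_eq (cycD Hn Hstep) _; abel.
by apply: cyc_eq (cycB Hn Hstep) _; abel.
Qed.

End CayleyWalks.

Section PeriodicWalk.
Variables (G : zmodType) (I : nat).

Definition periodic_walk (s : nat -> G) (n : int) : G :=
  (\sum_(i < I) s i) *~ (n %/ I%:Z)%Z + \sum_(i < `|(n %% I%:Z)%Z|) s i.

Lemma periodic_walkE s (q : int) (r : nat) : (r < I)%N ->
  periodic_walk s (q * I%:Z + r%:Z) = (\sum_(i < I) s i) *~ q + \sum_(i < r) s i.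
Proof.
move=> rI; have I_neq0 : I%:Z != 0 by rewrite eqz_nat -lt0n (leq_ltn_trans _ rI).
by rewrite /periodic_walk divzMDl // modzMDl divz_small ?modz_small ?addr0.
Qed.

Lemma periodic_walkS (I_gt0 : (0 < I)%N) s n :
  periodic_walk s (n + 1) = periodic_walk s n + s `|(n %% I%:Z)%Z|%N.
Proof.
have [q [r rI ->]] := int_divmod n I_gt0.
rewrite modzMDl modz_small /= ?periodic_walkE //.
have [rI' | rI'] := ltnP r.+1 I.
  have -> : q * I%:Z + r%:Z + 1 = q * I%:Z + r.+1%:Z by lia.
  by rewrite periodic_walkE // big_ord_recr addrA.
have IE : I = r.+1 by lia.
have -> : q * I%:Z + r%:Z + 1 = (q + 1) * I%:Z + 0%N%:Z by lia.
rewrite periodic_walkE // big_ord0 addr0 mulrzDr mulr1z -addrA.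
by congr (_ + _); rewrite IE big_ord_recr.
Qed.

Lemma periodic_walk_cayley (a b : G) s : (0 < I)%N ->
  (forall i, s i = a \/ s i = b) -> cayley_walk a b (periodic_walk s).
Proof.
move=> I_gt0 s_ab n; rewrite periodic_walkS //.
by case: (s_ab `|(n %% I%:Z)%Z|%N) => ->; [left | right].
Qed.

Section Level.
Variables (h x : G).
Hypothesis xI : order_mod h x I.
Local Notation H := (cyc h).
Let I_gt0 : (0 < I)%N := order_mod_gt0 xI.
Let I_neq0 : I%:Z != 0. Proof. by rewrite eqz_nat -lt0n. Qed.

Section Pattern.
Variable s : nat -> G.
Hypotheses (s_x : forall i, (i < I)%N -> H (s i - x)) (H_sum : H (\sum_(i < I) s i)).

Lemma periodic_walk_level n : H (periodic_walk s n - x *~ n).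
Proof.
have [q [r rI ->]] := int_divmod n I_gt0.
have HxqI : H (x *~ (q * I%:Z)) by apply/(cyc_mulrz_dvd xI); rewrite dvdz_mull.
have Hsum_r : H (\sum_(i < r) (s i - x)).
  by apply: cyc_sum => i; apply/s_x/(ltn_trans _ rI).
apply: cyc_eq (cycB (cycD (cycMz q H_sum) Hsum_r) HxqI) _.
by rewrite periodic_walkE // sumrB sumr_const card_ord; abel.
Qed.

Lemma periodic_walk_bijective : generates_mod h x -> infinite_order h ->
  same_subgroup H (cyc (\sum_(i < I) s i)) -> bijective (periodic_walk s).
Proof.
move=> gen h_inf HD; apply: inj_surj_bijective => [n m | v].
  move=> nm; have nmI : (n = m %[mod I%:Z])%Z.
    apply: (cyc_mulrz_eqmod xI (periodic_walk_level n)).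
    by rewrite nm; apply: periodic_walk_level.
  move: nm; rewrite /periodic_walk nmI => /addIr/eqP; rewrite -subr_eq0 -mulrzBr.
  move/eqP/(same_subgroup_infinite_order HD h_inf)/eqP; rewrite subr_eq0 => /eqP nmq.
  by rewrite (divz_eq n I%:Z) (divz_eq m I%:Z) nmq nmI.
have [c Hvc] := gen v; set r := `|(c %% I%:Z)%Z|%N.
have r_eq : r%:Z = (c %% I%:Z)%Z by rewrite gez0_abs // modz_ge0.
have rI : (r < I)%N by rewrite -ltz_nat r_eq ltz_pmod // ltz_nat.
have Hr : H (\sum_(i < r) s i - x *~ r%:Z).
  have := periodic_walk_level r%:Z.
  by rewrite -[r%:Z]add0r -(mul0r I%:Z) periodic_walkE // mulr0z add0r.
have [q vE] : cyc (\sum_(i < I) s i) (v - \sum_(i < r) s i).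
  apply/HD; apply: cyc_eq (cycB (cycD Hvc (cyc_mulrz_mod xI c)) Hr) _.
  by rewrite -r_eq; abel.
by exists (q * I%:Z + r%:Z); rewrite periodic_walkE // -vE; abel.
Qed.

End Pattern.

Lemma periodic_walk_arc_disjoint (s t : nat -> G) :
  (forall i, (i < I)%N -> H (s i - x)) -> H (\sum_(i < I) s i) ->
  (forall i, (i < I)%N -> H (t i - x)) -> H (\sum_(i < I) t i) ->
  (forall i, (i < I)%N -> s i != t i) ->
  arc_disjoint (periodic_walk s) (periodic_walk t).
Proof.
move=> s_x Hs t_x Ht st i j [ij ij1].
have ijI : (i = j %[mod I%:Z])%Z.
  apply: (cyc_mulrz_eqmod xI (periodic_walk_level s_x Hs i)).
  by rewrite ij; apply: periodic_walk_level.
move: ij1; rewrite !(periodic_walkS I_gt0) ij ijI => /addrI; apply/eqP/st.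
by rewrite -ltz_nat gez0_abs ?modz_ge0 ?ltz_pmod // ltz_nat.
Qed.

End Level.

End PeriodicWalk.

Definition arc_disjoint_ham_paths (G : zmodType) (a b : G) : Prop :=
  exists f g : int -> G,
    two_way_ham_path a b f /\ two_way_ham_path a b g /\ arc_disjoint f g.

Definition index_condition (G : zmodType) (a b : G) : Prop :=
  exists I : nat, index_is (cyc (a - b)) I /\
    exists k l : nat, (k + l)%N = I /\
      same_subgroup (cyc (a - b)) (cyc (a *+ k + b *+ l)) /\
      same_subgroup (cyc (a - b)) (cyc (a *+ l + b *+ k)).

Section OutSteps.
Variables (G : zmodType) (a b : G).
Hypothesis ab : a != b.

Definition out_step (F : int -> G) (Fi : G -> int) (v : G) := F (Fi v + 1) - v.

Lemma out_stepE F Fi m : cancel F Fi -> out_step F Fi (F m) = F (m + 1) - F m.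
Proof. by move=> FK; rewrite /out_step FK. Qed.

Lemma out_step_ab F Fi v : cancel Fi F -> cayley_walk a b F ->
  out_step F Fi v = a \/ out_step F Fi v = b.
Proof.
by move=> FiK /(_ (Fi v)); rewrite /out_step FiK => -[] ->; [left | right]; abel.
Qed.

Lemma out_step_shift_ab F Fi v : cancel F Fi -> cancel Fi F ->
  out_step F Fi v = a -> out_step F Fi (v + (a - b)) = b -> False.
Proof.
move=> FK FiK /eqP; rewrite subr_eq => /eqP Fv /eqP; rewrite subr_eq => /eqP Fv'.
have : F (Fi v + 1) = F (Fi (v + (a - b)) + 1) by rewrite Fv Fv'; abel.
move=> /(can_inj FK)/addIr/(can_inj FiK)/eqP; rewrite -subr_eq0.
have -> : v - (v + (a - b)) = b - a by abel.
by rewrite subr_eq0 eq_sym (negbTE ab).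
Qed.

Variables (f g : int -> G) (fi gi : G -> int).
Hypotheses (fK : cancel f fi) (fiK : cancel fi f).
Hypotheses (gK : cancel g gi) (giK : cancel gi g).
Hypotheses (f_walk : cayley_walk a b f) (g_walk : cayley_walk a b g).
Hypothesis fg : arc_disjoint f g.
Local Notation H := (cyc (a - b)).
Local Notation sf := (out_step f fi).

Lemma out_step_compl v : out_step g gi v = a + b - sf v.
Proof.
have sfg : sf v <> out_step g gi v.
  by move=> /addIr sfg; apply: fg (conj _ sfg); rewrite fiK giK.
case: (out_step_ab v fiK f_walk) (out_step_ab v giK g_walk) sfg => -> [] -> sfg;
  by [case: (sfg erefl) | abel].
Qed.

Lemma out_step_shift v : sf (v + (a - b)) = sf v.
Proof.
have [sf_v | sf_v] := out_step_ab v fiK f_walk;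
  have [sf_w | sf_w] := out_step_ab (v + (a - b)) fiK f_walk; rewrite sf_v sf_w //.
  by case: (out_step_shift_ab fK fiK sf_v sf_w).
by case: (out_step_shift_ab (v := v) gK giK); rewrite out_step_compl ?sf_v ?sf_w; abel.
Qed.

Lemma out_step_coset u v : H (u - v) -> sf u = sf v.
Proof.
move=> [m uE]; have -> : u = v + (a - b) *~ m by rewrite -uE; abel.
elim/int_ind_succ: m {uE} => [|m]; first by rewrite mulr0z addr0.
by rewrite mulrzDr mulr1z addrA out_step_shift.
Qed.

Lemma exists_order_mod_ab : exists I, order_mod (a - b) a I.
Proof.
set n0 := fi (f 0 + (a - b)); have f_n0 : f n0 = f 0 + (a - b) by rewrite fiK.
apply: (@exists_order_mod _ _ _ n0).
  apply/eqP => n0_0; move: ab; rewrite -subr_eq0 => /eqP; apply.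
  by apply: (@addrI _ (f 0)); rewrite addr0 -f_n0 n0_0.
apply: cyc_eq (cycB (cyc_id (a - b)) (cayley_walk_level f_walk n0)) _.
by rewrite f_n0; abel.
Qed.

Hypothesis gen : generates2 a b.

Section Period.
Variable I : nat.
Hypothesis aI : order_mod (a - b) a I.
Local Notation S j := (sf (a *~ j)).
Local Notation U := (\sum_(u < I) S u%:Z).

Lemma out_step_periodic j : S (j + I%:Z) = S j.
Proof.
apply: out_step_coset; apply: cyc_eq ((cyc_mulrz_dvd aI I%:Z).2 (dvdzz _)) _; abel.
Qed.

Lemma sum_out_steps F n : cayley_walk a b F -> \sum_(u < I) sf (F (n + u%:Z)) = U.
Proof.
move=> Fw; have [c Hc] := generates_mod_ab gen (F 0).
rewrite -(sumr_shift_periodic (c + n) out_step_periodic); apply: eq_bigr => u _.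
apply: out_step_coset.
by apply: cyc_eq (cycD (cayley_walk_level Fw (n + u%:Z)) Hc) _; abel.
Qed.

Lemma f_periodic n : f (n + I%:Z) = f n + U.
Proof.
apply: (@addIr _ (- f n)); rewrite [RHS]addrAC subrr add0r walk_telescope.
by rewrite -(sum_out_steps n f_walk); apply: eq_bigr => u _; rewrite out_stepE.
Qed.

Lemma g_periodic n : g (n + I%:Z) = g n + ((a + b) *+ I - U).
Proof.
apply: (@addIr _ (- g n)); rewrite [RHS]addrAC subrr add0r walk_telescope.
have -> : (a + b) *+ I = \sum_(u < I) (a + b) by rewrite sumr_const card_ord.
rewrite -(sum_out_steps n g_walk) -sumrB.
apply: eq_bigr => u _.
by rewrite -out_step_compl out_stepE.
Qed.

End Period.

Lemma index_condition_of_ham_paths : index_condition a b.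
Proof.
have [I aI] := exists_order_mod_ab.
pose S (u : 'I_I) := sf (a *~ u%:Z).
set k := #|[pred u | S u == a]|; set l := #|[pred u | S u != a]|.
have U_E : \sum_u S u = a *+ k + b *+ l by apply: sumr_ab => u; apply: out_step_ab.
have kl : (k + l)%N = I by rewrite cardC card_ord.
exists I; split; first exact: index_of_order_mod (generates_mod_ab gen) aI.
exists k, l; split=> //; split.
  apply: (same_subgroup_of_periodic aI (Bijective fK fiK) (cayley_walk_level f_walk)).
  by move=> n; rewrite f_periodic // U_E.
apply: (same_subgroup_of_periodic aI (Bijective gK giK) (cayley_walk_level g_walk)).
by move=> n; rewrite g_periodic // U_E -[in (a + b) *+ I]kl; abel.
Qed.

End OutSteps.

Definition split_word (G : zmodType) (k : nat) (x y : G) (i : nat) : G :=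
  if (i < k)%N then x else y.

Lemma sumr_split_word (G : zmodType) (k l : nat) (x y : G) :
  \sum_(i < k + l) split_word k x y i = x *+ k + y *+ l.
Proof.
rewrite big_split_ord /split_word /=; congr (_ + _).
  rewrite (eq_bigr (fun=> x)) => [|i _]; first by rewrite sumr_const card_ord.
  by rewrite ltn_ord.
rewrite (eq_bigr (fun=> y)) => [|i _]; first by rewrite sumr_const card_ord.
by rewrite ltnNge leq_addr.
Qed.

Section SplitWordPaths.
Variables (G : zmodType) (a b : G) (k l : nat).
Hypotheses (gen : generates2 a b) (aI : order_mod (a - b) a (k + l)).
Local Notation H := (cyc (a - b)).

Section Word.
Variables x y : G.
Hypotheses (x_ab : x = a \/ x = b) (y_ab : y = a \/ y = b).

Lemma split_word_ab i : split_word k x y i = a \/ split_word k x y i = b.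
Proof. by rewrite /split_word; case: ifP. Qed.

Lemma split_word_level i : (i < k + l)%N -> H (split_word k x y i - a).
Proof. by move=> _; apply/cyc_step_ab/split_word_ab. Qed.

Lemma split_word_ham_path : infinite_order (a - b) ->
  same_subgroup H (cyc (x *+ k + y *+ l)) ->
  two_way_ham_path a b (periodic_walk (k + l) (split_word k x y)).
Proof.
move=> h_inf HD; have I_gt0 := order_mod_gt0 aI.
split; last exact: periodic_walk_cayley I_gt0 split_word_ab.
have H_sum : H (\sum_(i < k + l) split_word k x y i).
  by rewrite sumr_split_word; apply/HD/cyc_id.
apply: (periodic_walk_bijective aI split_word_level H_sum (generates_mod_ab gen) h_inf).
by rewrite sumr_split_word.
Qed.

End Word.

Lemma split_words_arc_disjoint : a != b ->
  H (a *+ k + b *+ l) -> H (b *+ k + a *+ l) ->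
  arc_disjoint (periodic_walk (k + l) (split_word k a b))
               (periodic_walk (k + l) (split_word k b a)).
Proof.
move=> ab Hab Hba; have a_ab : a = a \/ a = b by left.
have b_ab : b = a \/ b = b by right.
apply: (periodic_walk_arc_disjoint aI (split_word_level a_ab b_ab) _
         (split_word_level b_ab a_ab)); rewrite ?sumr_split_word // => i _.
by rewrite /split_word; case: ifP; rewrite // eq_sym.
Qed.

End SplitWordPaths.

Lemma ham_paths_of_index_condition (G : zmodType) (a b : G) :
  infinite_zmod G -> generates2 a b -> a != b ->
  index_condition a b -> arc_disjoint_ham_paths a b.
Proof.
move=> Ginf gen ab [I [HI [k [l [kl [HDab HDba]]]]]]; subst I.
have HDba' : same_subgroup (cyc (a - b)) (cyc (b *+ k + a *+ l)).
  by rewrite [b *+ k + _]addrC.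
have Hab := (HDab _).2 (cyc_id _); have Hba := (HDba' _).2 (cyc_id _).
have HaI : cyc (a - b) (a *+ (k + l)).
  by apply: cyc_eq (cycD Hab (cycMz l%:Z (cyc_id (a - b)))) _; abel.
have aI := order_mod_of_index (generates_mod_ab gen) HI HaI.
have h_inf := index_infinite_order Ginf HI.
exists (periodic_walk (k + l) (split_word k a b)).
exists (periodic_walk (k + l) (split_word k b a)).
split; [|split]; last exact: split_words_arc_disjoint.
  by apply: split_word_ham_path => //; [left | right].
by apply: split_word_ham_path => //; [right | left].
Qed.

Theorem mainTheorem16 (G : zmodType) (a b : G) :
  infinite_zmod G -> generates2 a b -> a != b ->
  ((exists f g : int -> G,
       two_way_ham_path a b f /\ two_way_ham_path a b g /\ arc_disjoint f g)
   <->
   (exists I : nat, index_is (cyc (a - b)) I /\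
      exists k l : nat, (k + l)%N = I /\
        same_subgroup (cyc (a - b)) (cyc (a *+ k + b *+ l)) /\
        same_subgroup (cyc (a - b)) (cyc (a *+ l + b *+ k)))).
Proof.
move=> Ginf gen ab; split; first last.
  exact: ham_paths_of_index_condition.
move=> [f [g [[[fi fK fiK] f_walk] [[[gi gK giK] g_walk] fg]]]].
exact: (index_condition_of_ham_paths ab fK fiK gK giK f_walk g_walk fg gen).
Qed.
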